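(* Let $n\ge3$ and let $F(x,y)=a_0\prod_{i=1}^n(x-\alpha_iy)\in\mathbb{Z}[x,y]$ be a binary form of degree $n$ in the class $C(4s-2)$, with discriminant $D$ and Mahler measure $M$, and put $L_i(x,y)=x-\alpha_iy$. Let $h$ be a positive integer with $h<\frac{|D|^{1/(4(n-1))}}{10^n n^{n/(4(n-1))}}$ and put $Q=M/h$. Let $0\le\mathfrak{a}\le\mathfrak{b}$ with $\mathfrak{b}\le h$ and $\mathfrak{b}\le h^{1/2}\mathfrak{a}$, and suppose $F$ is reduced with respect to $(\mathfrak{a},\mathfrak{b})$. Suppose $(x_0,y_0)$ and $(x,y)$ are linearly independent primitive integer points with $\mathfrak{a}\le|F(x_0,y_0)|\le\mathfrak{b}$ and $\mathfrak{a}\le|F(x,y)|\le\mathfrak{b}$. Then there are numbers $\psi_1,\dots,\psi_n$ with $\psi_i=0$ or $\frac{1}{2n}\le\psi_i\le1$ for each $i$, and $\sum_{i=1}^n\psi_i\ge\frac12$, such that for every $i\in\{1,\dots,n\}$ $$\left|\frac{L_i(x_0,y_0)}{L_i(x,y)}\right|\ge\left(Q^{\psi_i}-\frac32-h^{1/(2n)}\right)|x_0y-xy_0|.$$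
   Context: $\alpha_1,\dots,\alpha_n$ are the roots of $F(x,1)$ and $a_0=F(1,0)$. $C(t)$ is the set of binary forms of degree $n$ with integer coefficients, irreducible over $\mathbb{Q}$, such that for all real $(u,v)\neq(0,0)$ the form $uF_x+vF_y$ has at most $t$ real zeros. For $F=c\prod(x-\gamma_iy)$, $M(F)=|c|\prod_i\max(1,|\gamma_i|)$ and $D=c^{2(n-1)}\prod_{i<j}(\gamma_i-\gamma_j)^2$. Forms $F,G$ are equivalent if $G=\pm F(ax+by,cx+dy)$ with $\begin{pmatrix}a&b\\c&d\end{pmatrix}\in GL_2(\mathbb{Z})$. $F$ is normalized with respect to $(\mathfrak{a},\mathfrak{b})$ if $\mathfrak{a}\le|F(1,0)|\le\mathfrak{b}$, and reduced if it is normalized and has smallest Mahler measure among normalized forms equivalent to it. Primitive means $\gcd(x,y)=1$. *)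

From HB Require Import structures.
From mathcomp Require Import all_boot all_order all_algebra.
From mathcomp Require Import complex.
From mathcomp Require Import reals exp.

Set Implicit Arguments.
Unset Strict Implicit.
Unset Printing Implicit Defensive.

Import Order.TTheory GRing.Theory Num.Theory.
Local Open Scope ring_scope.

(* A binary form of degree n with integer coefficients is represented by the
   polynomial p : {poly int} with
       F(x,y) = \sum_(k <= n) p`_k x^k y^(n-k),
   i.e. p = F(x,1); a0 = F(1,0) = p`_n. *)

Definition feval (T : comPzRingType) (n : nat) (p : {poly int}) (x y : T) : T :=
  \sum_(k < n.+1) (p`_k)%:~R * x ^+ k * y ^+ (n - k).

Definition fevalx (T : comPzRingType) (n : nat) (p : {poly int}) (x y : T) : T :=
  \sum_(k < n.+1) (p`_k *+ k)%:~R * x ^+ k.-1 * y ^+ (n - k).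

Definition fevaly (T : comPzRingType) (n : nat) (p : {poly int}) (x y : T) : T :=
  \sum_(k < n.+1) (p`_k *+ (n - k))%:~R * x ^+ k * y ^+ (n - k).-1.

(* F is a binary form of degree n irreducible over Q.  (If F(1,0) = 0 then
   y divides F, so irreducibility forces size p = n+1, and then F is
   irreducible iff F(x,1) is irreducible in Q[x].) *)
Definition form_irreducible (n : nat) (p : {poly int}) : Prop :=
  size p = n.+1 /\ irreducible_poly (map_poly (intr : int -> rat) p).

(* the class C(t): irreducible forms such that for all real (u,v) <> (0,0),
   u F_x + v F_y has at most t real (projective, distinct) zeros *)
Definition in_classC (R : realType) (n : nat) (p : {poly int}) (t : nat) : Prop :=
  form_irreducible n p /\
  forall u v : R, (u, v) != (0, 0) ->
  forall zs : seq (R * R),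
    (forall z, z \in zs ->
       z != (0, 0) /\ u * fevalx n p z.1 z.2 + v * fevaly n p z.1 z.2 = 0) ->
    pairwise (fun z w : R * R => z.1 * w.2 - z.2 * w.1 != 0) zs ->
    (size zs <= t)%N.

Definition cnorm (R : rcfType) (z : R[i]) : R := complex.Re `|z|.

Definition rootsC (R : rcfType) (q : {poly R[i]}) : seq R[i] :=
  sval (closed_field_poly_normal q).

Definition mahler (R : rcfType) (p : {poly int}) : R :=
  (`|lead_coef p|)%:~R *
  \prod_(z <- rootsC (map_poly (intr : int -> R[i]) p)) Num.max 1 (cnorm z).

Definition equiv_form (n : nat) (p q : {poly int}) : Prop :=
  (size q <= n.+1)%N /\
  exists a b c d e : int,
    (a * d - b * c = 1 \/ a * d - b * c = -1) /\ (e = 1 \/ e = -1) /\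
    forall x y : int,
      feval n q x y = e * feval n p (a * x + b * y) (c * x + d * y).

Definition normalized (R : realType) (n : nat) (p : {poly int}) (a b : R) : Prop :=
  a <= (`|p`_n|)%:~R <= b.

Definition reduced (R : realType) (n : nat) (p : {poly int}) (a b : R) : Prop :=
  normalized n p a b /\
  forall q, equiv_form n p q -> normalized n q a b -> mahler R p <= mahler R q.

Definition discr (R : rcfType) (n : nat) (p : {poly int}) (alpha : 'I_n -> R[i]) : R[i] :=
  (p`_n)%:~R ^+ (2 * (n - 1)) *
  \prod_(i < n) \prod_(j < n | (i < j)%N) (alpha i - alpha j) ^+ 2.

Definition Lform (R : rcfType) (n : nat) (alpha : 'I_n -> R[i]) (i : 'I_n) (x y : int) : R[i] :=
  x%:~R - alpha i * y%:~R.

From mathcomp Require Import all_boot all_order all_algebra.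
From mathcomp Require Import complex.
From mathcomp Require Import reals exp.
From mathcomp Require Import ring lra.
Set Implicit Arguments.
Unset Strict Implicit.
Unset Printing Implicit Defensive.

Import Order.TTheory GRing.Theory Num.Theory.
Local Open Scope ring_scope.

(* Complete the primitive point (x, y) to a unimodular basis (x, b; y, d), the
   second vector shifted by a multiple of the first so that
   (x0, y0) = X (x, y) + Y (b, d) with |X/Y| <= 1/2; here |Y| = |x0 y - x y0|.
   The form G(X, Y) = F(x X + b Y, y X + d Y) is equivalent to F, normalized
   since G(1, 0) = F(x, y), and its roots are beta_i = - L_i(b, d) / L_i(x, y).
   Reducedness gives M(F) <= M(G) = |F(x, y)| prod_i max(1, |beta_i|), hence
   Q <= prod_i max(1, |beta_i|).  For Q > 1 take psi_i = min(1, l_i) with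
   l_i = log max(1, |beta_i|) / log Q, replaced by 0 when l_i < 1/(2n): since
   sum_i l_i >= 1, the psi_i sum to at least 1 - n/(2n) = 1/2 (for Q <= 1 take
   psi_i = 1).
   Finally L_i(x0, y0) / L_i(x, y) = Y (X/Y - beta_i) and
   |X/Y - beta_i| >= max(1, |beta_i|) - 3/2. *)

Lemma feval_intr (K : comNzRingType) n p (x y : int) :
  (feval n p x y)%:~R = feval n p (x%:~R : K) y%:~R.
Proof.
rewrite /feval rmorph_sum; apply: eq_bigr => k _ /=.
by rewrite !rmorphM !rmorphXn /= intz.
Qed.

Lemma eq_poly_of_horner (K : numDomainType) (p q : {poly K}) :
  (forall z, p.[z] = q.[z]) -> p = q.
Proof.
move=> pq; apply/eqP; rewrite -subr_eq0; apply/negPn/negP => pq_neq0.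
pose rs : seq K := [seq i%:R | i <- iota 0 (size (p - q))].
have rs_roots : all (root (p - q)) rs.
  by apply/allP => z /mapP [i _ ->]; rewrite /root hornerD hornerN pq subrr.
have rs_uniq : uniq rs.
  by rewrite map_inj_uniq ?iota_uniq // => i j /eqP; rewrite eqr_nat => /eqP.
by have := max_poly_roots pq_neq0 rs_roots rs_uniq; rewrite size_map size_iota ltnn.
Qed.

Section ProdXsubCOrd.
Variables (K : nzRingType) (n : nat) (g : 'I_n -> K).

Lemma size_prod_XsubC_ord : size (\prod_(i < n) ('X - (g i)%:P)) = n.+1.
Proof. by rewrite size_prod_XsubC -[in RHS](card_ord n) cardT enumT /index_enum unlock. Qed.

Lemma coef_prod_XsubC_ord : (\prod_(i < n) ('X - (g i)%:P))`_n = 1.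
Proof.
have /monicP := monic_prod_XsubC (index_enum 'I_n) predT g.
by rewrite /lead_coef size_prod_XsubC_ord.
Qed.

End ProdXsubCOrd.

Lemma feval_prodE (K : numFieldType) n (r : {poly int}) (c : K) (g : 'I_n -> K) :
  map_poly intr r = c *: \prod_(i < n) ('X - (g i)%:P) ->
  forall z w, feval n r z w = c * \prod_i (z - g i * w).
Proof.
move=> r_factor z w.
have size_r : (size r <= n.+1)%N.
  rewrite -(size_map_inj_poly (@intr_inj K) (rmorph0 _)) r_factor.
  by apply: leq_trans (size_scale_leq _ _) _; rewrite size_prod_XsubC_ord.
have r_n : (r`_n)%:~R = c.
  by rewrite -coef_map_id0 // r_factor coefZ coef_prod_XsubC_ord mulr1.
have [->|w_neq0] := eqVneq w 0.
  rewrite /feval big_ord_recr /= subnn expr0 mulr1 big1 ?add0r => [|[k lt_kn] _].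
    rewrite r_n (eq_bigr (fun=> z)) ?prodr_const ?card_ord // => i _.
    by rewrite mulr0 subr0.
  by rewrite /= expr0n subn_eq0 leqNgt lt_kn mulr0.
have -> : feval n r z w = w ^+ n * (map_poly intr r).[z / w].
  rewrite (@horner_coef_wide _ n.+1) ?(size_map_inj_poly (@intr_inj K)) //.
  rewrite mulr_sumr /feval; apply: eq_bigr => -[k lt_kn] _ /=.
  rewrite coef_map_id0 // -(subnKC (_ : k <= n)%N) // exprD.
  by rewrite exprMn exprVn addKn; field; rewrite expf_neq0.
rewrite r_factor hornerZ horner_prod mulrCA; congr (_ * _).
rewrite -[X in w ^+ X](card_ord n) -prodr_const -big_split /=.
by apply: eq_bigr => i _; rewrite !hornerE; field.
Qed.

Definition subst_form n (p : {poly int}) (a b c d : int) : {poly int} :=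
  \sum_(k < n.+1) p`_k *: ((a%:P * 'X + b%:P) ^+ k * (c%:P * 'X + d%:P) ^+ (n - k)).

Definition subst_root (R : rcfType) n (alpha : 'I_n -> R[i]) (a b c d : int)
    (i : 'I_n) : R[i] :=
  - Lform alpha i b d / Lform alpha i a c.

Lemma horner_subst_form (K : numFieldType) n p a b c d (t : K) :
  (map_poly intr (subst_form n p a b c d)).[t] =
  feval n p (a%:~R * t + b%:~R) (c%:~R * t + d%:~R).
Proof.
rewrite /subst_form rmorph_sum horner_sum /feval; apply: eq_bigr => k _.
rewrite -mul_polyC !rmorphM !rmorphXn !rmorphD !rmorphM /= !map_polyC map_polyX /=.
by rewrite !hornerE.
Qed.

Section SubstForm.
Variables (R : rcfType) (n : nat) (p : {poly int}) (alpha : 'I_n -> R[i]).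
Hypothesis p_factor :
  map_poly intr p = (p`_n)%:~R *: \prod_(i < n) ('X - (alpha i)%:P).
Variables (a b c d : int).
Hypothesis F_ac_neq0 : feval n p a c != 0.

Local Notation q := (subst_form n p a b c d).
Local Notation beta := (subst_root alpha a b c d).

Lemma feval_prod_Lform x y :
  (feval n p x y)%:~R = (p`_n)%:~R * \prod_i Lform alpha i x y.
Proof. by rewrite feval_intr (feval_prodE p_factor). Qed.

Lemma Lform_neq0 i : Lform alpha i a c != 0.
Proof.
move: F_ac_neq0; rewrite -(intr_eq0 R[i]) feval_prod_Lform mulf_eq0 negb_or.
by case/andP => _ /prodf_neq0; apply.
Qed.

Lemma map_subst_form :
  map_poly intr q = (feval n p a c)%:~R *: \prod_(i < n) ('X - (beta i)%:P).
Proof.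
apply: eq_poly_of_horner => t.
rewrite horner_subst_form (feval_prodE p_factor) feval_prod_Lform hornerZ horner_prod.
rewrite -mulrA -big_split /=; congr (_ * _); apply: eq_bigr => i _.
by have := Lform_neq0 i; rewrite /beta /subst_root /Lform !hornerE => ?; field.
Qed.

Lemma size_subst_form : (size q <= n.+1)%N.
Proof.
rewrite -(size_map_inj_poly (@intr_inj R[i]) (rmorph0 _)) map_subst_form.
by apply: leq_trans (size_scale_leq _ _) _; rewrite size_prod_XsubC_ord.
Qed.

Lemma coef_subst_form : q`_n = feval n p a c.
Proof.
apply: (@intr_inj R[i]).
by rewrite -coef_map_id0 // map_subst_form coefZ coef_prod_XsubC_ord mulr1.
Qed.

Lemma feval_subst_form X Y :
  feval n q X Y = feval n p (a * X + b * Y) (c * X + d * Y).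
Proof.
apply: (@intr_inj R[i]).
rewrite !feval_intr (feval_prodE map_subst_form) (feval_prodE p_factor) feval_prod_Lform.
rewrite !rmorphD !rmorphM /= -mulrA -big_split /=; congr (_ * _).
apply: eq_bigr => i _; have := Lform_neq0 i.
by rewrite /beta /subst_root /Lform => ?; field.
Qed.

Lemma mahler_subst_form :
  mahler R q = (`|feval n p a c|)%:~R * \prod_(i < n) Num.max 1 (cnorm (beta i)).
Proof.
have lead_q : lead_coef q = feval n p a c.
  apply: (@intr_inj R[i]); rewrite -(lead_coef_map_inj (@intr_inj R[i])) //.
  rewrite map_subst_form lead_coefZ /lead_coef size_prod_XsubC_ord.
  by rewrite coef_prod_XsubC_ord mulr1.
rewrite /mahler /rootsC lead_q; congr (_ * _).
case: closed_field_poly_normal => rs /= q_split.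
suff perm_rs : perm_eq [seq beta i | i <- index_enum 'I_n] rs.
  by rewrite -(perm_big _ perm_rs) big_map.
apply: prod_XsubC_eq; rewrite big_map; apply: (@scalerI _ _ (feval n p a c)%:~R).
  by rewrite intr_eq0.
by rewrite -map_subst_form {1}q_split (lead_coef_map_inj (@intr_inj R[i])) // lead_q.
Qed.

End SubstForm.

Section ComplexNorm.
Local Open Scope complex_scope.
Variable R : rcfType.

Lemma cnormE (z : R[i]) : (cnorm z)%:C = `|z|.
Proof. by rewrite /cnorm normc_def. Qed.

Lemma cnormR (r : R) : cnorm r%:C = `|r|.
Proof. by rewrite /cnorm normc_def /= expr0n addr0 sqrtr_sqr. Qed.

Lemma cnorm_int (z : int) : cnorm (z%:~R : R[i]) = `|z|%:~R.
Proof. by rewrite -(rmorph_int (real_complex R)) cnormR intr_norm. Qed.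

Lemma cnorm_ge0 (z : R[i]) : 0 <= cnorm z.
Proof. by rewrite -lecR rmorph0 cnormE. Qed.

Lemma cnormM (z w : R[i]) : cnorm (z * w) = cnorm z * cnorm w.
Proof. by apply: complexI; rewrite rmorphM !cnormE normrM. Qed.

Lemma ler_cnormB (z w : R[i]) : cnorm w - cnorm z <= cnorm (z - w).
Proof. by rewrite -lecR rmorphB /= !cnormE distrC lerB_dist. Qed.

End ComplexNorm.

Lemma max1_cnorm_le (R : rcfType) (t : R) (z : R[i]) :
  `|t| <= 1 / 2 -> Num.max 1 (cnorm z) - 3 / 2 <= cnorm (t%:C%C - z).
Proof.
move=> t_small; have := ler_cnormB t%:C%C z; rewrite cnormR => tri.
have := cnorm_ge0 (t%:C%C - z); rewrite lerBlDr ge_max => ?.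
by apply/andP; split; lra.
Qed.

Lemma Lform_lin (R : rcfType) n (alpha : 'I_n -> R[i]) i (x y b d X Y : int) :
  Lform alpha i (X * x + Y * b) (X * y + Y * d) =
  X%:~R * Lform alpha i x y + Y%:~R * Lform alpha i b d.
Proof. by rewrite /Lform !rmorphD !rmorphM /=; ring. Qed.

Lemma Lform_ratio (R : rcfType) n (alpha : 'I_n -> R[i]) i (x y b d X Y : int) :
  Lform alpha i x y != 0 -> Y != 0 ->
  Lform alpha i (X * x + Y * b) (X * y + Y * d) / Lform alpha i x y =
  Y%:~R * ((X%:~R / Y%:~R : R)%:C%C - subst_root alpha x b y d i).
Proof.
move=> L_neq0 Y_neq0; have Y_neq0' : (Y%:~R : R[i]) != 0 by rewrite intr_eq0.
rewrite Lform_lin fmorph_div /= !rmorph_int /subst_root; field.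
by rewrite L_neq0 Y_neq0'.
Qed.

Lemma mahler_ge0 (R : rcfType) (p : {poly int}) : 0 <= mahler R p.
Proof.
rewrite /mahler mulr_ge0 ?ler0z // prodr_ge0 // => z _.
by rewrite le_max ler01.
Qed.

Lemma normalized_lo_gt0 (R : realType) n (p : {poly int}) (lo hi c : R) :
  size p = n.+1 -> 0 <= lo -> hi <= c * lo -> normalized n p lo hi -> 0 < lo.
Proof.
move=> size_p lo_ge0 hi_le /andP [_ pn_le_hi]; rewrite lt_def lo_ge0 andbT.
have : p`_n != 0.
  by rewrite -[n]/(n.+1.-1) -size_p -lead_coefE lead_coef_eq0 -size_poly_eq0 size_p.
apply: contra => /eqP lo_eq0; move: hi_le; rewrite lo_eq0 mulr0 => hi_le0.
by rewrite -normr_le0 -(lerz0 R) (le_trans pn_le_hi hi_le0).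
Qed.

Lemma nearest_unimodular_basis (K : archiRealFieldType) (x0 y0 x y : int) :
  gcdz x y = 1 -> x0 * y - x * y0 != 0 ->
  exists b d X Y : int,
    [/\ x * d - b * y = 1, x0 = X * x + Y * b, y0 = X * y + Y * d,
        `|Y| = `|x0 * y - x * y0| & `|X%:~R / Y%:~R : K| <= 1 / 2].
Proof.
move=> xy_coprime det_neq0; have [u [v uv]] := Bezoutz x y; rewrite xy_coprime in uv.
pose Y := x * y0 - y * x0; pose X0 := u * x0 + v * y0.
have Y_neq0 : (Y%:~R : K) != 0.
  by rewrite intr_eq0 /Y -oppr_eq0 opprB (mulrC y).
pose t : K := X0%:~R / Y%:~R; pose k := Num.floor (t + 1 / 2).
exists (- v + k * x), (u + k * y), (X0 - k * Y), Y; split.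
- by rewrite -uv; ring.
- by rewrite -[LHS]mul1r -uv /X0 /Y; ring.
- by rewrite -[LHS]mul1r -uv /X0 /Y; ring.
- by rewrite /Y -normrN opprB (mulrC y).
have -> : (X0 - k * Y)%:~R / Y%:~R = t - k%:~R :> K.
  by rewrite /t rmorphB rmorphM /=; field.
have := floor_itv (t + 1 / 2); rewrite -/k rmorphD /= => /andP [? ?].
by rewrite ler_norml; apply/andP; split; lra.
Qed.

Lemma reduced_mahler_le (R : realType) n p (alpha : 'I_n -> R[i]) (lo hi : R)
    (x y b d : int) :
  map_poly intr p = (p`_n)%:~R *: \prod_(i < n) ('X - (alpha i)%:P) ->
  reduced n p lo hi -> x * d - b * y = 1 ->
  feval n p x y != 0 -> lo <= `|feval n p x y|%:~R <= hi ->
  mahler R p <=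
    `|feval n p x y|%:~R * \prod_i Num.max 1 (cnorm (subst_root alpha x b y d i)).
Proof.
move=> p_factor [_ p_min] unimod F_neq0 F_normalized.
apply: le_trans (p_min (subst_form n p x b y d) _ _) _.
- split; first exact: (size_subst_form (R := R) p_factor b d F_neq0).
  exists x, b, y, d, 1; split; [by left | split; [by left | move=> X Y]].
  by rewrite (feval_subst_form (R := R) p_factor b d F_neq0) mul1r.
- by rewrite /normalized (coef_subst_form (R := R) p_factor b d F_neq0).
- by rewrite (mahler_subst_form (R := R) p_factor b d F_neq0).
Qed.

Lemma sum_min1_ge1 (R : realDomainType) n (l : 'I_n -> R) :
  (forall i, 0 <= l i) -> 1 <= \sum_i l i -> 1 <= \sum_i Num.min (l i) 1.
Proof.
move=> l_ge0 sum_ge1; have [j l_j|l_lt1] := pickP (fun i => 1 <= l i).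
  rewrite (bigD1 j) //= (min_r l_j) lerDl sumr_ge0 // => i _.
  by rewrite le_min l_ge0 ler01.
apply: le_trans sum_ge1 _; apply: ler_sum => i _.
by rewrite min_l // ltW // ltNge l_lt1.
Qed.

Lemma truncated_exponents (R : realFieldType) n (l : 'I_n -> R) :
  (0 < n)%N -> (forall i, 0 <= l i) -> 1 <= \sum_i l i ->
  exists psi : 'I_n -> R,
    [/\ forall i, psi i = 0 \/ (1 / (2 * n%:R) <= psi i <= 1),
        1 / 2 <= \sum_(i < n) psi i & forall i, 0 <= psi i <= l i].
Proof.
move=> n_gt0 l_ge0 sum_ge1; set eps : R := 1 / (2 * n%:R).
have n_ge1 : 1 <= n%:R :> R by rewrite ler1n.
have eps_gt0 : 0 < eps by rewrite divr_gt0 // mulr_gt0 // ltr0n.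
have eps_le1 : eps <= 1 by rewrite ler_pdivrMr ?mulr_gt0 ?ltr0n //; lra.
exists (fun i => if l i < eps then 0 else Num.min (l i) 1); split.
- move=> i; case: ifP => [_|l_ge_eps]; [by left | right].
  by rewrite le_min eps_le1 andbT leNgt l_ge_eps ge_min lexx orbT.
- have sum_eps : \sum_(i < n) eps = 1 / 2.
    by rewrite sumr_const card_ord -mulr_natr /eps; field; rewrite pnatr_eq0 -lt0n.
  apply: le_trans (_ : \sum_i (Num.min (l i) 1 - eps) <= _).
    by rewrite sumrB sum_eps; have := sum_min1_ge1 l_ge0 sum_ge1; lra.
  apply: ler_sum => i _; case: ifP => [l_lt_eps|_]; last by rewrite gerDl oppr_le0 ltW.
  have : Num.min (l i) 1 <= l i by rewrite ge_min lexx.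
  lra.
- move=> i; case: ifP => _; first by rewrite lexx l_ge0.
  by rewrite le_min l_ge0 ler01 ge_min lexx.
Qed.

Lemma ln_prod (R : realType) n (m : 'I_n -> R) :
  (forall i, 0 < m i) -> ln (\prod_i m i) = \sum_i ln (m i).
Proof.
move=> m_gt0.
suff [] : 0 < \prod_i m i /\ ln (\prod_i m i) = \sum_i ln (m i) by [].
apply: (big_rec2 (fun a b => 0 < a /\ ln a = b)); first by rewrite ln1 ltr01.
by move=> i a b _ [a_gt0 <-]; rewrite mulr_gt0 // (lnM (m_gt0 i)).
Qed.

Lemma exponents_of_prod_ge (R : realType) n (Q : R) (m : 'I_n -> R) :
  (0 < n)%N -> 0 <= Q -> (forall i, 1 <= m i) -> Q <= \prod_i m i ->
  exists psi : 'I_n -> R,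
    [/\ forall i, psi i = 0 \/ (1 / (2 * n%:R) <= psi i <= 1),
        1 / 2 <= \sum_(i < n) psi i & forall i, Q `^ psi i <= m i].
Proof.
move=> n_gt0 Q_ge0 m_ge1 Q_le.
have m_gt0 i : 0 < m i by apply: lt_le_trans (m_ge1 i).
have [Q_le1|Q_gt1] := leP Q 1.
  have n_ge1 : 1 <= n%:R :> R by rewrite ler1n.
  exists (fun=> 1); split => [i||i].
  - by right; rewrite lexx andbT ler_pdivrMr ?mulr_gt0 ?ltr0n //; lra.
  - by rewrite sumr_const card_ord -[1 *+ n]/(n%:R); lra.
  - by rewrite powRr1 // (le_trans Q_le1).
have lnQ_gt0 : 0 < ln Q by apply: ln_gt0.
pose l i := ln (m i) / ln Q.
have [i||psi [psi_range psi_sum psi_le]] := @truncated_exponents R n l n_gt0.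
- exact: divr_ge0 (ln_ge0 (m_ge1 i)) (ltW lnQ_gt0).
- rewrite /l -mulr_suml -ln_prod // ler_pdivlMr // mul1r ler_ln ?posrE //.
    exact: lt_trans Q_gt1.
  by apply: lt_le_trans Q_le; apply: lt_trans Q_gt1.
exists psi; split => // i; have /andP [_ psi_le_l] := psi_le i.
apply: le_trans (ler_powR (ltW Q_gt1) psi_le_l) _.
by rewrite /powR gt_eqF ?(lt_trans ltr01) // /l mulfVK ?gt_eqF // lnK ?posrE.
Qed.

Theorem lemma7p2 (R : realType) (n s h : nat) (p : {poly int})
  (alpha : 'I_n -> R[i]) (a b : R) (x0 y0 x y : int) :
  (3 <= n)%N -> (0 < s)%N ->
  in_classC R n p (4 * s - 2) ->
  map_poly (intr : int -> R[i]) p = (p`_n)%:~R *: \prod_(i < n) ('X - (alpha i)%:P) ->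
  (0 < h)%N ->
  h%:R < cnorm (discr p alpha) `^ (1 / (4 * (n%:R - 1)))
           / (10 ^+ n * n%:R `^ (n%:R / (4 * (n%:R - 1)))) ->
  0 <= a -> a <= b -> b <= h%:R -> b <= Num.sqrt (h%:R) * a ->
  reduced n p a b ->
  gcdz x0 y0 = 1 -> gcdz x y = 1 -> x0 * y - x * y0 != 0 ->
  a <= (`|feval n p x0 y0|)%:~R <= b ->
  a <= (`|feval n p x y|)%:~R <= b ->
  exists psi : 'I_n -> R,
    [/\ forall i, psi i = 0 \/ (1 / (2 * n%:R) <= psi i <= 1),
        1 / 2 <= \sum_(i < n) psi i &
        forall i,
          ((mahler R p / h%:R) `^ (psi i) - 3 / 2 - h%:R `^ (1 / (2 * n%:R)))
            * (`|x0 * y - x * y0|)%:~R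
          <= cnorm (Lform alpha i x0 y0 / Lform alpha i x y)].
Proof.
move=> n_ge3 _ [[size_p _] _] p_factor h_gt0 _ a_ge0 _ b_le_h b_le_sqrt_h_a
  p_reduced _ xy_coprime det_neq0 _ /andP [a_le_F F_le_b].
have a_gt0 := normalized_lo_gt0 size_p a_ge0 b_le_sqrt_h_a p_reduced.1.
have F_neq0 : feval n p x y != 0.
  by rewrite -normr_gt0 -(ltr0z R) (lt_le_trans a_gt0 a_le_F).
have [b' [d' [X [Y [unimod ex0 ey0 det_eq t_small]]]]] :=
  nearest_unimodular_basis R xy_coprime det_neq0.
set beta := subst_root alpha x b' y d'; set Q := mahler R p / h%:R.
have [|i||psi [psi_range psi_sum psi_le]] := @exponents_of_prod_ge R n Q
  (fun i => Num.max 1 (cnorm (beta i))) (ltnW (ltnW n_ge3)).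
- by rewrite divr_ge0 ?ler0n // mahler_ge0.
- by rewrite le_max lexx.
- rewrite ler_pdivrMr ?ltr0n // mulrC.
  apply: le_trans (reduced_mahler_le p_factor p_reduced unimod F_neq0 _) _.
    by rewrite a_le_F F_le_b.
  rewrite ler_wpM2r ?(le_trans F_le_b) // prodr_ge0 // => i _.
  by rewrite le_max ler01.
exists psi; split => // i.
have Y_neq0 : Y != 0 by rewrite -normr_gt0 det_eq normr_gt0.
rewrite -det_eq ex0 ey0 Lform_ratio ?(Lform_neq0 p_factor F_neq0) //.
rewrite cnormM cnorm_int mulrC ler_wpM2l ?ler0z // -/beta.
have := max1_cnorm_le (beta i) t_small; have := psi_le i.
have := @powR_ge0 R h%:R (1 / (2 * n%:R)); lra.
Qed.
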